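(* Let $X$ be a space equipped with a metric $d: X\times X\to\mathbb{R}$, let $P_X$ be a fixed distribution on $X$, let $P_{Z|X}$ be a Markov kernel from $X$ to a feature space $Z$, and let $\epsilon\ge 0$. The following are equivalent: (1) there exists a Markov kernel $\hat P_{X|Z}$ from $Z$ to $X$ such that $\mathbb{E}_{x\sim P_X}\mathbb{E}_{x'\sim \hat P_{X|Z}\circ P_{Z|x}} d(x,x')\le\epsilon$; (2) for every $\lambda\ge 0$, every label space $Y$, every action space $A$, every joint distribution $P_{XY}$ on $X\times Y$ with $X$-marginal $P_X$, and every loss $L:Y\times A\to\mathbb{R}_+$ whose reconstruction regret satisfies $D_r(x,x')\le\lambda d(x,x')$ for all $x,x'\in X$, one has $\Delta\underline{R}_L(P_{XY},P_{Z|X})\le\epsilon\lambda$.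
   Context: For a distribution $P$ on $Y$, a Bayes act is $a_P\in\arg\inf_a\mathbb{E}_{y\sim P}L(y,a)$ (assumed to exist), $L(y,P):=L(y,a_P)$, and the regret is $D_L(P,Q):=\mathbb{E}_{y\sim P}L(y,Q)-\mathbb{E}_{y\sim P}L(y,P)$. For a joint distribution $P_{WY}$, $\underline{R}_L(P_{WY})=\inf_{f\in A^W}\mathbb{E}_{P_{WY}}L(y,f(w))$, and the Bayes optimal rule is $f_{P_{XY}}(x)=a_{P_{Y|x}}$; standing assumption: all such infima over decision rules (including randomized ones) are attained. The induced feature–label distribution is $P_{ZY}=P_Y\otimes(P_{Z|X}\circ P_{X|Y})$, and the feature gap is $\Delta\underline{R}_L(P_{XY},P_{Z|X}) := \underline{R}_L(P_{ZY})-\underline{R}_L(P_{XY})$. The reconstruction regret of $P_{XY}$ and $L$ is $D_r(x,x') := D_L(P_{Y|x},P_{Y|x'}) = \mathbb{E}_{y\sim P_{Y|x}}L(y,f_{P_{XY}}(x'))-\mathbb{E}_{y\sim P_{Y|x}}L(y,f_{P_{XY}}(x))$. $\hat P_{X|Z}\circ P_{Z|x}$ denotes the law of $x'$ obtained by drawing $z\sim P_{Z|x}$ then $x'\sim\hat P_{X|z}$. *)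

From HB Require Import structures.
From mathcomp Require Import all_boot all_order all_algebra.
From mathcomp Require Import all_classical all_reals all_analysis.
Set Implicit Arguments. Unset Strict Implicit. Unset Printing Implicit Defensive.
Import Order.TTheory GRing.Theory Num.Theory.
Local Open Scope classical_set_scope.
Local Open Scope ring_scope.
Local Open Scope ereal_scope.

Section Defs.
Context {R : realType}.

Definition is_metric {T : Type} (d : T -> T -> R) : Prop :=
  [/\ (forall x y, d x y = 0%R <-> x = y),
      (forall x y, d x y = d y x) &
      (forall x y z, (d x z <= d x y + d y z)%R)].

Context {dX dY dZ dA : measure_display}
  {X : measurableType dX} {Y : measurableType dY}
  {Z : measurableType dZ} {A : measurableType dA}.

Definition recon_err (PX : probability X R) (PZX : R.-pker X ~> Z)
  (Qh : R.-pker Z ~> X) (d : X -> X -> R) : \bar R :=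
  \int[PX]_x \int[PZX x]_z \int[Qh z]_x' (d x x')%:E.

(** The joint P_XY is P_X (x) P_{Y|X}.  Risk of a (randomized) decision rule
    g : X ~> A on P_XY. *)
Definition riskX (PX : probability X R) (PYX : R.-pker X ~> Y)
  (L : Y -> A -> R) (g : R.-pker X ~> A) : \bar R :=
  \int[PX]_x \int[PYX x]_y \int[g x]_a (L y a)%:E.

(** Risk of a (randomized) decision rule g : Z ~> A on the induced
    feature-label distribution P_ZY (x ~ P_X, y ~ P_{Y|x}, z ~ P_{Z|x}). *)
Definition riskZ (PX : probability X R) (PYX : R.-pker X ~> Y)
  (PZX : R.-pker X ~> Z) (L : Y -> A -> R) (g : R.-pker Z ~> A) : \bar R :=
  \int[PX]_x \int[PYX x]_y \int[PZX x]_z \int[g z]_a (L y a)%:E.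

Definition bayes_riskX PX PYX L : \bar R :=
  ereal_inf [set riskX PX PYX L g | g in [set: R.-pker X ~> A]].

Definition bayes_riskZ PX PYX PZX L : \bar R :=
  ereal_inf [set riskZ PX PYX PZX L g | g in [set: R.-pker Z ~> A]].

Definition feature_gap PX PYX PZX L : \bar R :=
  bayes_riskZ PX PYX PZX L - bayes_riskX PX PYX L.

Definition bayes_rule (PYX : R.-pker X ~> Y) (L : Y -> A -> R) (f : X -> A) :=
  forall x (a : A),
    \int[PYX x]_y (L y (f x))%:E <= \int[PYX x]_y (L y a)%:E.

Definition recon_regret (PYX : R.-pker X ~> Y) (L : Y -> A -> R)
  (f : X -> A) (x x' : X) : \bar R :=
  \int[PYX x]_y (L y (f x'))%:E - \int[PYX x]_y (L y (f x))%:E.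

End Defs.

From HB Require Import structures.
From mathcomp Require Import all_boot all_order all_algebra.
From mathcomp Require Import all_classical all_reals all_analysis.
From mathcomp Require Import measurable_realfun.
Set Implicit Arguments. Unset Strict Implicit. Unset Printing Implicit Defensive.
Import Order.TTheory GRing.Theory Num.Theory.
Local Open Scope classical_set_scope.
Local Open Scope ring_scope.
Local Open Scope ereal_scope.

(* (1) -> (2): decode the feature z to x' ~ Qh z and act as the Bayes rule
   would at x'.  At input x this costs the Bayes loss at x plus the regret
   D_r(x, x') <= lam d(x, x'), so averaging over x the feature gap is at most
   lam times the reconstruction error.
   (2) -> (1): take noiseless labels Y = A = X with loss d.  The identity is a
   Bayes rule with regret exactly d, the Bayes risk on X vanishes, and the risk
   of a feature-level rule Z ~> X is its reconstruction error as a decoder, so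
   the feature gap is the optimal reconstruction error. *)

Lemma le_integral_pointwise d (T : measurableType d) (R : realType)
    (mu : set T -> \bar R) (D : set T) (f g : T -> \bar R) :
  (forall x, D x -> f x <= g x) -> \int[mu]_(x in D) f x <= \int[mu]_(x in D) g x.
Proof.
move=> fg; have fgD x : (f \_ D) x <= (g \_ D) x.
  by rewrite /patch; case: ifP => // /set_mem/fg.
rewrite /integral; apply: leeB; apply: le_ereal_sup => _ [h /= hf <-].
- exists h => //= x; apply: le_trans (hf x) _.
  exact: (@funepos_le _ _ setT) (fun x _ => fgD x) x (in_setT x).
- exists h => //= x; apply: le_trans (hf x) _.
  exact: (@funeneg_le _ _ setT) (fun x _ => fgD x) x (in_setT x).
Qed.

Section finite_measure_of.
Context d (T : measurableType d) (R : realType) (mu : {measure set T -> \bar R}).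

(* The finiteness proof is an argument only so that the finite-measure
   instance below can be keyed on it. *)
Definition finite_measure_of (_ : fin_num_fun mu) : set T -> \bar R := mu.

Variable fmu : fin_num_fun mu.

HB.instance Definition _ := Measure.on (finite_measure_of fmu).
HB.instance Definition _ := Measure_isFinite.Build _ _ _ (finite_measure_of fmu) fmu.

End finite_measure_of.

Section finite_measure_fubini.
Context d1 d2 (T1 : measurableType d1) (T2 : measurableType d2) (R : realType).
Variables (m1 : {measure set T1 -> \bar R}) (m2 : {measure set T2 -> \bar R}).
Hypotheses (fm1 : fin_num_fun m1) (fm2 : fin_num_fun m2).

Lemma finite_fubini_tonelli (f : T1 * T2 -> \bar R) :
  measurable_fun [set: T1 * T2] f -> (forall z, 0 <= f z) ->
  \int[m1]_x \int[m2]_y f (x, y) = \int[m2]_y \int[m1]_x f (x, y).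
Proof.
exact: (fubini_tonelli (m1 := finite_measure_of fm1)
  (m2 := finite_measure_of fm2) f).
Qed.

Lemma measurable_fun_finite_integral (f : T1 * T2 -> \bar R) :
  measurable_fun [set: T1 * T2] f -> (forall z, 0 <= f z) ->
  measurable_fun [set: T1] (fun x => \int[m2]_y f (x, y)).
Proof.
exact: (measurable_fun_fubini_tonelli_F
  (m2 := finite_measure_of fm2) f).
Qed.

End finite_measure_fubini.

Section ksnd.
Context dt dz dx (T : measurableType dt) (Z : measurableType dz)
  (X : measurableType dx) (R : realType) (Q : R.-fker Z ~> X).

Definition ksnd (p : T * Z) : {measure set X -> \bar R} := Q p.2.

Let measurable_ksnd U : measurable U -> measurable_fun [set: T * Z] (ksnd ^~ U).
Proof. by move=> mU; exact: measurableT_comp (measurable_kernel Q U mU) measurable_snd. Qed.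

HB.instance Definition _ := isKernel.Build _ _ _ _ R ksnd measurable_ksnd.

Let ksnd_uub : measure_fam_uub ksnd.
Proof. by have [r Qr] := measure_uub Q; exists r => p; exact: Qr. Qed.

HB.instance Definition _ := Kernel_isFinite.Build _ _ _ _ R ksnd ksnd_uub.

Lemma measurable_fun_integral_ksnd (F : T * X -> \bar R) :
  measurable_fun [set: T * X] F -> (forall p, 0 <= F p) ->
  measurable_fun [set: T * Z] (fun p => \int[Q p.2]_x F (p.1, x)).
Proof.
move=> mF F0; apply: (measurable_fun_integral_finite_kernel
  (fun q : (T * Z) * X => F (q.1.1, q.2)) ksnd) => //.
apply: measurableT_comp mF _; apply: measurable_fun_pair => //.
exact: measurableT_comp measurable_fst measurable_fst.
Qed.

End ksnd.

Section kpushforward.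
Context dz dx da (Z : measurableType dz) (X : measurableType dx)
  (A : measurableType da) (R : realType) (Q : R.-pker Z ~> X) (f : X -> A).
Hypothesis mf : measurable_fun [set: X] f.

(* The measure instance on [pushforward] is found only from [mf]. *)
Definition kpushforward (z : Z) : {measure set A -> \bar R}.
Proof. exact: (pushforward (Q z) f : {measure set A -> \bar R}). Defined.

Let measurable_kpushforward U :
  measurable U -> measurable_fun [set: Z] (kpushforward ^~ U).
Proof.
move=> mU; apply: (measurable_kernel Q (f @^-1` U)).
by rewrite -[X in measurable X]setTI; exact: mf.
Qed.

HB.instance Definition _ := isKernel.Build _ _ _ _ R kpushforward measurable_kpushforward.

Let kpushforward_setT z : kpushforward z [set: A] = 1.
Proof. by change (Q z (f @^-1` [set: A]) = 1); rewrite preimage_setT prob_kernel. Qed.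

HB.instance Definition _ := Kernel_isProbability.Build _ _ _ _ R kpushforward kpushforward_setT.

Lemma integral_kpushforward z (F : A -> \bar R) :
  measurable_fun [set: A] F -> (forall a, 0 <= F a) ->
  \int[kpushforward z]_a F a = \int[Q z]_x F (f x).
Proof.
move=> mF F0; have := ge0_integral_pushforward mf (Q z) measurableT mF (fun a _ => F0 a).
by rewrite preimage_setT.
Qed.

End kpushforward.

Lemma integral_kdirac dx dy (X : measurableType dx) (Y : measurableType dy)
    (R : realType) (f : X -> Y) (mf : measurable_fun [set: X] f) x (F : Y -> \bar R) :
  measurable_fun [set: Y] F -> \int[kdirac mf x]_y F y = F (f x).
Proof. by move=> mF; rewrite integral_dirac // diracT mul1e. Qed.

Lemma ge0_integral_cstD_scale d (T : measurableType d) (R : realType)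
    (mu : {measure set T -> \bar R}) (c : \bar R) (k : R) (h : T -> \bar R) :
  mu [set: T] = 1 -> 0 <= c -> (0 <= k)%R ->
  measurable_fun [set: T] h -> (forall x, 0 <= h x) ->
  \int[mu]_x (c + k%:E * h x) = c + k%:E * \int[mu]_x h x.
Proof.
move=> mu1 c0 k0 mh h0.
rewrite ge0_integralD //; last 2 first.
- by move=> x _; rewrite mule_ge0.
- exact: measurable_funeM.
by rewrite integral_cst // mu1 mule1 ge0_integralZl.
Qed.

Lemma measurable_fun_EFin_comp2 d1 d2 d3 (T1 : measurableType d1)
    (T2 : measurableType d2) (T3 : measurableType d3) (R : realType)
    (F : T1 -> T2 -> R) (u : T3 -> T1) (v : T3 -> T2) :
  measurable_fun [set: T1 * T2] (fun p : T1 * T2 => F p.1 p.2) ->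
  measurable_fun [set: T3] u -> measurable_fun [set: T3] v ->
  measurable_fun [set: T3] (fun w => (F (u w) (v w))%:E).
Proof.
move=> mF mu mv; apply/measurable_EFinP.
exact: (measurableT_comp (f := fun p : T1 * T2 => F p.1 p.2)
  (g := fun w => (u w, v w)) mF (measurable_fun_pair mu mv)).
Qed.

Lemma metric_ge0 (R : realType) (T : Type) (d : T -> T -> R) :
  is_metric d -> forall x y, (0 <= d x y)%R.
Proof.
move=> [d0 dsym dtri] x y; have := dtri x y x.
rewrite (dsym y x) (d0 x x).2 // => h.
by rewrite -(@pmulr_rge0 _ 2%R) // mulr2n mulrDl !mul1r.
Qed.

Section feature_gap_upper_bound.
Context (R : realType) (dX dY dZ dA : measure_display) (X : measurableType dX)
  (Y : measurableType dY) (Z : measurableType dZ) (A : measurableType dA).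
Variables (PX : probability X R) (PYX : R.-pker X ~> Y) (PZX : R.-pker X ~> Z).
Variables (L : Y -> A -> R) (f : X -> A).
Hypotheses (L0 : forall y a, (0 <= L y a)%R)
  (mL : measurable_fun [set: Y * A] (fun p : Y * A => L p.1 p.2))
  (mf : measurable_fun [set: X] f).

Let mLE : measurable_fun [set: Y * A] (fun p : Y * A => (L p.1 p.2)%:E).
Proof. exact/measurable_EFinP. Qed.

Let mLf : measurable_fun [set: Y * X] (fun p : Y * X => (L p.1 (f p.2))%:E).
Proof. exact: measurable_fun_EFin_comp2 mL _ (measurableT_comp mf measurable_snd). Qed.

Let bayes_loss x := \int[PYX x]_y (L y (f x))%:E.

Let bayes_loss_ge0 x : 0 <= bayes_loss x.
Proof. by apply: integral_ge0 => y _; rewrite lee_fin. Qed.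

Let measurable_bayes_loss : measurable_fun [set: X] bayes_loss.
Proof.
apply: (measurable_fun_integral_finite_kernel
  (fun p : X * Y => (L p.2 (f p.1))%:E) PYX) => [p|]; first by rewrite lee_fin.
exact: measurable_fun_EFin_comp2 mL measurable_snd (measurableT_comp mf measurable_fst).
Qed.

Lemma bayes_loss_le_bayes_riskX : bayes_rule PYX L f ->
  \int[PX]_x bayes_loss x <= bayes_riskX PX PYX L.
Proof.
move=> f_bayes; apply/ereal_infP => _ [g _ <-]; apply: le_integral_pointwise => x _.
rewrite (finite_fubini_tonelli (finite_kernel_measure PYX x)
  (finite_kernel_measure g x) mLE) => [/=|p]; last by rewrite lee_fin.
have -> : bayes_loss x = \int[g x]_a bayes_loss x.
  by rewrite integral_cst // prob_kernel mule1.
by apply: le_integral_pointwise => a _; exact: f_bayes.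
Qed.

Variables (d : X -> X -> R) (lam : R).
Hypotheses (d0 : forall x x', (0 <= d x x')%R)
  (md : measurable_fun [set: X * X] (fun p : X * X => d p.1 p.2)) (lam0 : (0 <= lam)%R)
  (regret_le : forall x x', recon_regret PYX L f x x' <= (lam * d x x')%:E).

Let mdE : measurable_fun [set: X * X] (fun p : X * X => (d p.1 p.2)%:E).
Proof. exact/measurable_EFinP. Qed.

Section decoder.
Variable Qh : R.-pker Z ~> X.

Let recon_loss x := \int[PZX x]_z \int[Qh z]_x' (d x x')%:E.

Let recon_loss_ge0 x : 0 <= recon_loss x.
Proof. by apply: integral_ge0 => z _; apply: integral_ge0 => x' _; rewrite lee_fin. Qed.

Let measurable_recon_loss : measurable_fun [set: X] recon_loss.
Proof.
apply: (measurable_fun_integral_finite_kernel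
  (fun p : X * Z => \int[Qh p.2]_x' (d p.1 x')%:E) PZX).
- by move=> p; apply: integral_ge0 => x' _; rewrite lee_fin.
- by apply: measurable_fun_integral_ksnd mdE _ => p; rewrite lee_fin.
Qed.

Let decoded_loss_le x :
  \int[PYX x]_y \int[PZX x]_z \int[kpushforward Qh mf z]_a (L y a)%:E <=
  bayes_loss x + lam%:E * recon_loss x.
Proof.
have Lf0 (p : Y * X) : 0 <= (L p.1 (f p.2))%:E by rewrite lee_fin.
have dx0 x' : 0 <= (d x x')%:E by rewrite lee_fin.
have mdx : measurable_fun [set: X] (fun x' => (d x x')%:E).
  exact: measurable_fun_EFin_comp2 md (measurable_cst x) _.
have push_loss y z : \int[kpushforward Qh mf z]_a (L y a)%:E =
    \int[Qh z]_x' (L y (f x'))%:E.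
  apply: integral_kpushforward => [|a]; last by rewrite lee_fin.
  exact: measurable_fun_EFin_comp2 mL (measurable_cst y) _.
have swap_Qh z : \int[PYX x]_y \int[Qh z]_x' (L y (f x'))%:E =
    \int[Qh z]_x' \int[PYX x]_y (L y (f x'))%:E.
  exact: (finite_fubini_tonelli (finite_kernel_measure PYX x)
    (finite_kernel_measure Qh z) mLf).
have loss_le x' : \int[PYX x]_y (L y (f x'))%:E <= bayes_loss x + lam%:E * (d x x')%:E.
  by rewrite -EFinM -lee_subel_addl //; exact: regret_le.
have average_Qh z : \int[Qh z]_x' (bayes_loss x + lam%:E * (d x x')%:E) =
    bayes_loss x + lam%:E * \int[Qh z]_x' (d x x')%:E.
  exact: ge0_integral_cstD_scale (prob_kernel (s := Qh) z) (bayes_loss_ge0 x) lam0 mdx dx0.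
under eq_integral => y _ do under eq_integral => z _ do rewrite push_loss.
rewrite (finite_fubini_tonelli (finite_kernel_measure PYX x)
  (finite_kernel_measure PZX x) (measurable_fun_integral_ksnd Qh mLf Lf0)) /=; last first.
  by move=> p; apply: integral_ge0 => x' _; rewrite lee_fin.
under eq_integral => z _ do rewrite swap_Qh.
apply: (@le_trans _ _
  (\int[PZX x]_z \int[Qh z]_x' (bayes_loss x + lam%:E * (d x x')%:E))).
  by apply: le_integral_pointwise => z _; apply: le_integral_pointwise => x' _.
under eq_integral => z _ do rewrite average_Qh.
rewrite ge0_integral_cstD_scale ?prob_kernel //.
- exact: measurable_fun_integral_kernel (measurable_kernel Qh) _ _ mdx.
- by move=> z; apply: integral_ge0 => x' _.
Qed.

Lemma riskZ_kpushforward_le : riskZ PX PYX PZX L (kpushforward Qh mf) <=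
  \int[PX]_x bayes_loss x + lam%:E * recon_err PX PZX Qh d.
Proof.
rewrite /recon_err -ge0_integralZl //; last by move=> x _; exact: recon_loss_ge0.
rewrite -(ge0_integralD PX measurableT (fun x _ => bayes_loss_ge0 x) measurable_bayes_loss);
  last 2 first.
- by move=> x _; rewrite mule_ge0 // recon_loss_ge0.
- exact/measurable_funeM/measurable_recon_loss.
by apply: le_integral_pointwise => x _; exact: decoded_loss_le.
Qed.

End decoder.

Lemma feature_gap_le_recon_err (Qh : R.-pker Z ~> X) : bayes_rule PYX L f ->
  feature_gap PX PYX PZX L <= lam%:E * recon_err PX PZX Qh d.
Proof.
move=> f_bayes; have : bayes_riskZ PX PYX PZX L <= riskZ PX PYX PZX L (kpushforward Qh mf).
  by apply: ereal_inf_lbound; exists (kpushforward Qh mf).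
move/le_trans/(_ (riskZ_kpushforward_le Qh)) => bZ.
apply: le_trans (leeB bZ (bayes_loss_le_bayes_riskX f_bayes)) _.
have : 0 <= lam%:E * recon_err PX PZX Qh d.
  rewrite mule_ge0 // integral_ge0 // => x _.
  by apply: integral_ge0 => z _; apply: integral_ge0 => x' _; rewrite lee_fin.
case: (lam%:E * _) => [b _| _ |//]; last by rewrite leey.
by rewrite lee_subel_addl.
Qed.

End feature_gap_upper_bound.

Section kdirac_metric.
Context (R : realType) (dX dZ : measure_display) (X : measurableType dX)
  (Z : measurableType dZ) (d : X -> X -> R).
Hypotheses (dm : is_metric d)
  (md : measurable_fun [set: X * X] (fun p : X * X => d p.1 p.2))
  (mid : measurable_fun [set: X] id).

Let mdx x : measurable_fun [set: X] (fun x' => (d x x')%:E).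
Proof. exact: measurable_fun_EFin_comp2 md (measurable_cst x) _. Qed.

Let mdy x' : measurable_fun [set: X] (fun x => (d x x')%:E).
Proof. exact: measurable_fun_EFin_comp2 md _ (measurable_cst x'). Qed.

Let d_diag x : d x x = 0%R.
Proof. by case: dm => d0 _ _; exact/d0. Qed.

Lemma bayes_rule_kdirac_metric : bayes_rule (kdirac mid) d id.
Proof.
move=> x a; rewrite (integral_kdirac _ _ (mdy (id x))) (integral_kdirac _ _ (mdy a)).
by rewrite d_diag lee_fin metric_ge0.
Qed.

Lemma recon_regret_kdirac_metric x x' :
  recon_regret (kdirac mid) d id x x' = (d x x')%:E.
Proof.
rewrite /recon_regret (integral_kdirac _ _ (mdy (id x'))) (integral_kdirac _ _ (mdy (id x))).
by rewrite d_diag sube0.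
Qed.

Lemma bayes_riskX_kdirac_metric (PX : probability X R) :
  bayes_riskX PX (kdirac mid) d = 0.
Proof.
apply/eqP; rewrite eq_le; apply/andP; split.
- apply: ereal_inf_lbound; exists (kdirac mid) => //.
  rewrite /riskX integral0_eq // => x _.
  under eq_integral => y _ do rewrite (integral_kdirac _ _ (mdx y)).
  by rewrite (integral_kdirac _ _ (mdy x)) d_diag.
- apply/ereal_infP => _ [g _ <-]; apply: integral_ge0 => x _.
  by apply: integral_ge0 => y _; apply: integral_ge0 => a _; rewrite lee_fin metric_ge0.
Qed.

Lemma riskZ_kdirac_metric (PX : probability X R) (PZX : R.-pker X ~> Z)
    (g : R.-pker Z ~> X) :
  riskZ PX (kdirac mid) PZX d g = recon_err PX PZX g d.
Proof.
have dE0 (p : X * X) : 0 <= (d p.1 p.2)%:E by rewrite lee_fin metric_ge0.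
have mdE : measurable_fun [set: X * X] (fun p : X * X => (d p.1 p.2)%:E).
  exact/measurable_EFinP.
apply: eq_integral => x _; rewrite integral_kdirac //.
apply: (measurable_fun_finite_integral (finite_kernel_measure PZX x)
  (measurable_fun_integral_ksnd g mdE dE0)) => p.
by apply: integral_ge0 => a _.
Qed.

Lemma feature_gap_kdirac_metric (PX : probability X R) (PZX : R.-pker X ~> Z) :
  feature_gap PX (kdirac mid) PZX d =
  ereal_inf [set recon_err PX PZX g d | g in [set: R.-pker Z ~> X]].
Proof.
rewrite /feature_gap bayes_riskX_kdirac_metric sube0 /bayes_riskZ.
by congr ereal_inf; apply/seteqP; split=> _ [g _ <-]; exists g; rewrite ?riskZ_kdirac_metric.
Qed.

End kdirac_metric.

Theorem theorem5 (R : realType) (dX dZ : measure_display)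
  (X : measurableType dX) (Z : measurableType dZ)
  (d : X -> X -> R) (PX : probability X R) (PZX : R.-pker X ~> Z)
  (eps : R) :
  is_metric d ->
  measurable_fun [set: X * X] (fun p : X * X => d p.1 p.2) ->
  (0 <= eps)%R ->
  (* standing assumption, instance (Y = A = X, L = d, y = x):
     the infimum of the reconstruction error over (randomized) decoders
     Z ~> X is attained *)
  (exists Q0 : R.-pker Z ~> X,
      forall Q : R.-pker Z ~> X, recon_err PX PZX Q0 d <= recon_err PX PZX Q d) ->
  (exists Qh : R.-pker Z ~> X, recon_err PX PZX Qh d <= eps%:E)
  <->
  (forall (lam : R), (0 <= lam)%R ->
   forall (dY dA : measure_display) (Y : measurableType dY)
          (A : measurableType dA)
          (PYX : R.-pker X ~> Y) (L : Y -> A -> R) (f : X -> A),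
     (forall y a, (0 <= L y a)%R) ->
     measurable_fun [set: Y * A] (fun p : Y * A => L p.1 p.2) ->
     measurable_fun [set: X] f ->
     bayes_rule PYX L f ->
     (forall x x', recon_regret PYX L f x x' <= (lam * d x x')%:E) ->
     feature_gap PX PYX PZX L <= (eps * lam)%:E).
Proof.
move=> dm md _ [Q0 Q0_min]; have d0 := metric_ge0 dm.
split=> [[Qh Qh_eps] lam lam0 dY dA Y A PYX L f L0 mL mf f_bayes regret_le | gap_le].
  apply: le_trans (feature_gap_le_recon_err PX PZX L0 mL mf d0 md lam0 regret_le Qh f_bayes) _.
  by rewrite mulrC EFinM lee_wpmul2l.
have mid : measurable_fun [set: X] id by exact: measurable_id.
have := gap_le 1%R ler01 _ _ X X (kdirac mid) d id d0 md mid
  (bayes_rule_kdirac_metric dm md mid).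
rewrite feature_gap_kdirac_metric // mulr1 => inf_le.
exists Q0; apply: le_trans (inf_le _) => [|x x']; last first.
  by rewrite recon_regret_kdirac_metric // mul1r.
by apply/ereal_infP => _ [Q _ <-]; exact: Q0_min.
Qed.
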